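(* Consider any iteration of the while loop of algorithm Greedy-R, and let $(u,v)$ be the pair chosen in it. Then, with $S$ denoting the current set before $u\otimes v$ is inserted, for every $w\in\widetilde{S}$ we have $$\mathit{ov}(w,u\otimes v)=\mathit{ov}(w,u)\quad\text{and}\quad \mathit{ov}(u\otimes v,w)=\mathit{ov}(v,w).$$
   Context: For strings $x,y$, $\mathit{ov}(x,y)$ is the length of the longest suffix of $x$ that is also a prefix of $y$; $\mathrm{pref}(x,y)$ is $x$ with its suffix of length $\mathit{ov}(x,y)$ removed, and $x\otimes y=\mathrm{pref}(x,y)\,y$. $x^R$ denotes the reversal of $x$. For a set $X$ of strings, $\widetilde{X}=X\cup\{x^R:x\in X\}$. A set $X$ is reverse-factor-free if there are no distinct $x,y\in X$ such that $x$ is a factor of $y$ or of $y^R$. The procedure Make-Reverse-Factor-Free$(X)$ repeatedly removes from the current set a string $x$ for which some other string $y\neq x$ of the current set has $x$ as a factor of $y$ or of $y^R$, until no such string remains. Algorithm Greedy-R$(S)$ on a non-empty finite set of strings: first set $S:=$ Make-Reverse-Factor-Free$(S)$. Then, while $|S|>1$: among all pairs $(u,v)$ with $u,v\in\widetilde{S}$ and $u\notin\{v,v^R\}$, choose one with maximal $\mathit{ov}(u,v)$ (ties broken arbitrarily); set $S:=S\cup\{u\otimes v\}$ and then remove from $S$ all of $u,v,u^R,v^R$ that belong to $S$. Return the only element of $S$. *)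

From HB Require Import structures.
From mathcomp Require Import all_boot.
From mathcomp Require Import finmap.

Set Implicit Arguments.
Unset Strict Implicit.
Unset Printing Implicit Defensive.

Local Open Scope fset_scope.

Section Strings.
Variable T : choiceType.
Notation word := (seq T).

(* ov x y : length of the longest suffix of x that is also a prefix of y
   (not required to be proper). *)
Definition ov (x y : word) : nat :=
  \max_(k < (size x).+1 | drop (size x - k) x == take k y) (k : nat).

Definition pref (x y : word) : word := take (size x - ov x y) x.

Definition otimes (x y : word) : word := pref x y ++ y.

Definition factor (x y : word) : bool := infix x y.

Definition tilde (X : {fset word}) : {fset word} := X `|` [fset rev x | x in X].

Definition reverse_factor_free (X : {fset word}) : Prop :=
  forall x y, x \in X -> y \in X -> x != y -> ~~ factor x y && ~~ factor x (rev y).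

Definition mrff_step (X X' : {fset word}) : Prop :=
  exists x y, [/\ x \in X, y \in X, y != x, factor x y || factor x (rev y)
                & X' = X `\ x].

Inductive mrff_steps : {fset word} -> {fset word} -> Prop :=
| mrff_refl X : mrff_steps X X
| mrff_cons X Y Z : mrff_step X Y -> mrff_steps Y Z -> mrff_steps X Z.

(* Y is a possible output of Make-Reverse-Factor-Free(X) *)
Definition make_rff (X Y : {fset word}) : Prop :=
  mrff_steps X Y /\ ~ (exists Y', mrff_step Y Y').

(* (u,v) is a pair that may be chosen in the while loop on current set S *)
Definition greedy_choice (S : {fset word}) (u v : word) : Prop :=
  [/\ u \in tilde S, v \in tilde S, (u != v) && (u != rev v)
    & forall u' v', u' \in tilde S -> v' \in tilde S ->
        (u' != v') && (u' != rev v') -> ov u' v' <= ov u v].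

Definition greedy_next (S : {fset word}) (u v : word) : {fset word} :=
  (S `|` [fset otimes u v]) `\` [fset u; v; rev u; rev v].

(* S is the current set at the beginning of some iteration (or at the end)
   of the while loop of Greedy-R run on input S0 *)
Inductive greedy_reach (S0 : {fset word}) : {fset word} -> Prop :=
| greedy_start S : make_rff S0 S -> greedy_reach S0 S
| greedy_step S u v : greedy_reach S0 S -> 1 < #|` S| -> greedy_choice S u v ->
    greedy_reach S0 (greedy_next S u v).

End Strings.

From HB Require Import structures.
From mathcomp Require Import all_boot.
From mathcomp Require Import finmap.
From mathcomp Require Import zify.
Set Implicit Arguments.
Unset Strict Implicit.

(* Greedy-R keeps the current set reverse-factor-free: a word of the tilde set
   other than u, v and their reversals that is a factor of u (x) v must
   straddle the junction of u and v, and then overlaps u by more than ov u v,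
   against the maximality of the chosen pair.  As no word of the tilde set is a
   proper factor of another, an overlap of w with u (x) v = u q longer than u
   would put u strictly inside w, so it equals ov w u; the other equation is
   the mirror image, via ov x y = ov (rev y) (rev x). *)

Section Overlap.
Variable T : choiceType.
Implicit Types a b c d p q r s t u v w x y : seq T.

Lemma size_ov_cat a s b : size s <= ov (a ++ s) (s ++ b).
Proof.
have lt_s : size s < (size (a ++ s)).+1 by rewrite size_cat ltnS leq_addl.
apply: (bigmax_sup (Ordinal lt_s)) => //=.
by rewrite size_cat addnK drop_size_cat // take_size_cat.
Qed.

Lemma ov_witness x y :
  exists a s b, [/\ x = a ++ s, y = s ++ b & size s = ov x y].
Proof.
have lt0 : 0 < (size x).+1 by [].
have P0 : drop (size x - (Ordinal lt0 : nat)) x == take (Ordinal lt0) y.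
  by rewrite /= subn0 drop_size take0.
rewrite /ov (bigmax_eq_arg _ P0); case: arg_maxnP => // k /eqP Ek _.
have le_kx : k <= size x by rewrite -ltnS.
exists (take (size x - k) x), (drop (size x - k) x), (drop k y).
split; first exact/esym/cat_take_drop.
  by rewrite Ek cat_take_drop.
by rewrite size_drop; lia.
Qed.

Lemma ov_ub x y m :
  (forall a s b, x = a ++ s -> y = s ++ b -> size s <= m) -> ov x y <= m.
Proof. by have [a [s [b [-> -> <-]]]] := ov_witness x y; apply. Qed.

Lemma ov_rev x y : ov (rev y) (rev x) = ov x y.
Proof.
suff le_ov x' y' : ov x' y' <= ov (rev y') (rev x').
  by apply/eqP; rewrite eqn_leq le_ov -{2}[x]revK -{2}[y]revK le_ov.
apply: ov_ub => a s b -> ->; rewrite !rev_cat -(size_rev s).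
exact: size_ov_cat.
Qed.

Lemma cat_eq_prefix s c u q : s ++ c = u ++ q -> size s <= size u -> prefix s u.
Proof. by move=> E le_su; rewrite prefixE -(takel_cat q le_su) -E take_size_cat. Qed.

Lemma otimes_witness u v : exists p t q,
  [/\ u = p ++ t, v = t ++ q, size t = ov u v & otimes u v = p ++ v].
Proof.
have [p [t [q [Eu Ev Et]]]] := ov_witness u v.
exists p, t, q; split=> //.
by rewrite /otimes /pref -Et Eu size_cat addnK take_size_cat.
Qed.

Lemma prefix_otimes u v : prefix u (otimes u v).
Proof.
have [p [t [q [Eu Ev _ ->]]]] := otimes_witness u v.
by rewrite Eu Ev catA prefix_prefix.
Qed.

Lemma ov_catr w u q :
  (infix u w -> size w <= size u) -> ov w (u ++ q) = ov w u.
Proof.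
move=> proper_u; apply/eqP; rewrite eqn_leq; apply/andP; split; last first.
  by apply: ov_ub => a s b -> ->; rewrite -catA size_ov_cat.
apply: ov_ub => a s b Ew E; rewrite Ew in proper_u *.
have [le_su | lt_us] := leqP (size s) (size u).
  by have /prefixP [b' ->] := cat_eq_prefix (esym E) le_su; apply: size_ov_cat.
have /prefixP [d Es] := cat_eq_prefix E (ltnW lt_us).
have := proper_u; rewrite Es infix_infix size_cat => /(_ isT).
by move: lt_us; rewrite Es size_cat; lia.
Qed.

Lemma ov_catl w p v :
  (infix v w -> size w <= size v) -> ov (p ++ v) w = ov v w.
Proof.
move=> proper_v; rewrite -ov_rev rev_cat ov_catr ?ov_rev //.
by rewrite infix_rev !size_rev.
Qed.

Lemma infix_otimes a u v : infix a (otimes u v) ->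
  [|| infix a u, infix a v | ov u v < ov u a].
Proof.
have [p [t [q [Eu Ev Et ->]]]] := otimes_witness u v.
case/infixP=> c [d E].
have [le_pc | lt_cp] := leqP (size p) (size c).
  have /prefixP [c' Ec] := cat_eq_prefix E le_pc.
  rewrite Ec -catA in E; move/eqP: E; rewrite eqseq_cat // => /andP [_ /eqP ->].
  by rewrite infix_infix orbT.
have E' : c ++ a ++ d = u ++ q by rewrite -E Eu Ev catA.
have [le_cau | lt_uca] := leqP (size c + size a) (size u).
  have /prefixP [b ->] : prefix (c ++ a) u.
    by apply: (@cat_eq_prefix _ d _ q); rewrite ?size_cat -?catA.
  by rewrite -catA infix_infix.
have le_cu : size c <= size u by rewrite Eu size_cat ltnW ?ltn_addr.
have /prefixP [r Eu'] := cat_eq_prefix E' le_cu.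
rewrite Eu' -catA in E'; move/eqP: E'; rewrite eqseq_cat // => /andP [_ /eqP E'].
have /prefixP [a' Ea] : prefix r a.
  apply: cat_eq_prefix (esym E') _.
  by move: lt_uca; rewrite Eu' size_cat ltn_add2l => /ltnW.
have lt_tr : size t < size r.
  by rewrite -(ltn_add2l (size c)) -size_cat -Eu' Eu size_cat ltn_add2r.
have := size_ov_cat c r a'; rewrite -Eu' -Ea -Et => le_r_ov.
by rewrite (leq_trans lt_tr le_r_ov) !orbT.
Qed.

End Overlap.

Local Open Scope fset_scope.

Section ReverseFactorFree.
Variable T : choiceType.
Implicit Types (S : {fset seq T}) (a b u v x y : seq T).

Lemma mem_tilde S a : (a \in tilde S) = (a \in S) || (rev a \in S).
Proof.
rewrite /tilde in_fsetU; congr (_ || _).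
by apply/imfsetP/idP => [[x xS ->] | raS]; [rewrite revK | exists (rev a); rewrite ?revK].
Qed.

Lemma mem_tildeS S a : a \in S -> a \in tilde S.
Proof. by rewrite mem_tilde => ->. Qed.

Lemma mem_tilde_rev S a : (rev a \in tilde S) = (a \in tilde S).
Proof. by rewrite !mem_tilde revK orbC. Qed.

Lemma mem_rev_quad u v x :
  (rev x \in [:: u; v; rev u; rev v]) = (x \in [:: u; v; rev u; rev v]).
Proof. by rewrite !inE !(can2_eq revK revK) !revK orbA orbC -!orbA. Qed.

Lemma rff_eq S x y : reverse_factor_free S -> x \in S -> y \in S ->
  factor x y || factor x (rev y) -> x = y.
Proof.
move=> rffS xS yS F; apply/eqP/negPn/negP => /(rffS x y xS yS).
by rewrite -negb_or F.
Qed.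

Lemma rff_factor S a b : reverse_factor_free S ->
  a \in tilde S -> b \in tilde S -> factor a b -> a = b \/ a = rev b.
Proof.
move=> rffS aT bT F.
have Fr : factor (rev a) (rev b) by rewrite /factor infix_rev.
move: aT bT; rewrite !mem_tilde => /orP [aS|raS] /orP [bS|rbS].
- by left; apply: rff_eq rffS aS bS _; rewrite F.
- by right; apply: rff_eq rffS aS rbS _; rewrite revK F orbT.
- by right; rewrite -(rff_eq rffS raS bS) ?revK // Fr orbT.
- by left; apply: (can_inj revK); apply: rff_eq rffS raS rbS _; rewrite Fr.
Qed.

Lemma rff_infix_otimes S u v a : reverse_factor_free S -> greedy_choice S u v ->
  a \in tilde S -> factor a (otimes u v) -> a \in [:: u; v; rev u; rev v].
Proof.
move=> rffS [uT vT _ ov_max] aT /infix_otimes /or3P [au | av | lt_ov].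
- by case: (rff_factor rffS aT uT au) => ->; rewrite !inE eqxx ?orbT.
- by case: (rff_factor rffS aT vT av) => ->; rewrite !inE eqxx ?orbT.
have [<- | ua] := eqVneq u a; first by rewrite inE eqxx.
have [-> | ura] := eqVneq u (rev a); first by rewrite revK !inE eqxx ?orbT.
by move: (ov_max u a uT aT); rewrite ua ura leqNgt lt_ov => /(_ isT).
Qed.

Lemma mem_greedy_next S u v x : x \in greedy_next S u v =
  (x \notin [:: u; v; rev u; rev v]) && ((x \in S) || (x == otimes u v)).
Proof. by rewrite /greedy_next !inE !orbA. Qed.

Lemma rff_greedy_next S u v : reverse_factor_free S -> greedy_choice S u v ->
  reverse_factor_free (greedy_next S u v).
Proof.
move=> rffS choice; have [uT _ _ _] := choice.
set z := otimes u v.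
have old_not_factor x : x \in S -> x \notin [:: u; v; rev u; rev v] ->
    ~~ factor x z && ~~ factor x (rev z).
  move=> xS xN; rewrite /factor -infix_revLR; apply/andP; split; apply/negP => F.
    by move: xN; rewrite (rff_infix_otimes rffS choice (mem_tildeS xS) F).
  move: xN; rewrite -mem_rev_quad (rff_infix_otimes rffS choice _ F) //.
  by rewrite mem_tilde_rev mem_tildeS.
have new_not_factor x : x \in S -> x \notin [:: u; v; rev u; rev v] ->
    ~~ factor z x && ~~ factor z (rev x).
  move=> xS xN; rewrite -negb_or; apply/negP => F.
  have ux : u = x \/ u = rev x.
    case/orP: F => /(infix_trans (prefixW (prefix_otimes u v))) uF.
      exact: rff_factor rffS uT (mem_tildeS xS) uF.
    rewrite or_comm -{2}[x]revK; apply: rff_factor rffS uT _ uF.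
    by rewrite mem_tilde_rev mem_tildeS.
  by case: ux xN => ->; rewrite !inE ?revK eqxx ?orbT.
move=> x y; rewrite !mem_greedy_next.
case/andP=> xN /orP [xS | /eqP ->]; case/andP=> yN /orP [yS | /eqP ->] xy.
- exact: rffS.
- exact: old_not_factor.
- exact: new_not_factor.
- by rewrite eqxx in xy.
Qed.

Lemma rff_make_rff S0 S : make_rff S0 S -> reverse_factor_free S.
Proof.
move=> [_ final] x y xS yS xy; rewrite -negb_or; apply/negP => F.
by apply: final; exists (S `\ x), x, y; rewrite eq_sym.
Qed.

Lemma rff_greedy_reach S0 S : greedy_reach S0 S -> reverse_factor_free S.
Proof.
elim=> [S' /rff_make_rff // | S' u v _ rffS' _ choice].
exact: rff_greedy_next.
Qed.

End ReverseFactorFree.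

Theorem lemma2 (T : choiceType) (S0 S : {fset seq T}) (u v : seq T) :
  S0 != fset0 ->
  greedy_reach S0 S ->
  1 < #|` S| ->
  greedy_choice S u v ->
  forall w, w \in tilde S ->
    ov w (otimes u v) = ov w u /\ ov (otimes u v) w = ov v w.
Proof.
move=> _ reach _ [uT vT _ _] w wT.
have rffS := rff_greedy_reach reach.
have not_proper x : x \in tilde S -> infix x w -> size w <= size x.
  by move=> xT /(rff_factor rffS xT wT) [-> | ->]; rewrite ?size_rev.
have [p [t [q [Eu Ev _ ->]]]] := otimes_witness u v.
have Ez : p ++ v = u ++ q by rewrite Eu Ev catA.
by split; [rewrite Ez ov_catr | rewrite ov_catl] => //; apply: not_proper.
Qed.
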